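(* Let $r\ge2$ be an even integer, let $Q_0<Q_1<\dots<Q_n<Q_{n+1}$ and $P_1,\dots,P_n\in\mathbb R$. Then there is a unique $(\hat u_0,\dots,\hat u_{n+1})\in\mathbb R^{n+2}$ with $\hat u_0=\hat u_{n+1}=0$ satisfying, for $i=1,\dots,n$, $$P_i=-\left|\frac{\hat u_{i+1}-\hat u_i}{Q_{i+1}-Q_i}\right|^{r-2}\frac{\hat u_{i+1}-\hat u_i}{Q_{i+1}-Q_i}+\left|\frac{\hat u_i-\hat u_{i-1}}{Q_i-Q_{i-1}}\right|^{r-2}\frac{\hat u_i-\hat u_{i-1}}{Q_i-Q_{i-1}}.$$ *)

From mathcomp Require Import all_boot all_order all_algebra.
From mathcomp Require Import reals.
Set Implicit Arguments. Unset Strict Implicit. Unset Printing Implicit Defensive.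
Import Order.TTheory GRing.Theory Num.Theory.
Local Open Scope ring_scope.

Definition rphi (R : realType) (r : nat) (x : R) : R := `|x| ^+ (r - 2) * x.

Definition solves (R : realType) (r n : nat) (Q P u : nat -> R) : Prop :=
  u 0%N = 0 /\ u n.+1 = 0 /\
  forall i : nat, (1 <= i <= n)%N ->
    P i = - rphi r ((u i.+1 - u i) / (Q i.+1 - Q i))
          + rphi r ((u i - u i.-1) / (Q i - Q i.-1)).

From mathcomp Require Import all_boot all_order all_algebra.
From mathcomp Require Import reals.
From mathcomp Require Import boolp topology normedtype realfun.
From mathcomp Require Import lra.
Import Order.TTheory GRing.Theory Num.Theory.
Import numFieldNormedType.Exports.
Set Implicit Arguments. Unset Strict Implicit. Unset Printing Implicit Defensive.
Local Open Scope ring_scope.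

(* Shooting.  Write h_i = Q_{i+1} - Q_i, a_i = (u_{i+1} - u_i)/h_i and
   S_i = P_1 + ... + P_i.  Summing the equations gives
   phi_r(a_i) = c - S_i with c = phi_r(a_0), and phi_r is an increasing
   bijection of R, so every solution is the profile
   u_k = sum_{i<k} h_i phi_r^{-1}(c - S_i) for a flux c with
   F(c) := sum_{i<=n} h_i phi_r^{-1}(c - S_i) = 0.  Conversely each root of F
   gives a solution.  F is continuous, strictly increasing and changes sign,
   so it has exactly one root. *)

Section Rphi.
Variables (R : realType) (r : nat).
Local Notation phi := (@rphi R r).

Lemma rphiN x : phi (- x) = - phi x.
Proof. by rewrite /rphi normrN mulrN. Qed.

Lemma ger0_rphi x : 0 <= x -> phi x = x ^+ (r - 2).+1.
Proof. by move=> x_ge0; rewrite /rphi ger0_norm // exprSr. Qed.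

Lemma rphi_gt0 x : 0 < x -> 0 < phi x.
Proof. by move=> x_gt0; rewrite ger0_rphi ?ltW // exprn_gt0. Qed.

Lemma rphi_lt0 x : x < 0 -> phi x < 0.
Proof. by move=> x_lt0; rewrite -[x]opprK rphiN oppr_lt0 rphi_gt0 ?oppr_gt0. Qed.

Lemma lt_rphi : {homo phi : x y / x < y}.
Proof.
have lt_ge0 x y : 0 <= x -> x < y -> phi x < phi y.
  move=> x_ge0 xy; have y_ge0 := ltW (le_lt_trans x_ge0 xy).
  by rewrite !ger0_rphi // ltrXn2r.
move=> x y xy; have [x_ge0|x_lt0] := leP 0 x; first exact: lt_ge0.
have [y_le0|y_gt0] := leP y 0.
  by rewrite -ltrN2 -!rphiN lt_ge0 ?oppr_ge0 ?ltrN2.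
exact: (lt_trans (rphi_lt0 x_lt0) (rphi_gt0 y_gt0)).
Qed.

Lemma ler_rphi : {mono phi : x y / x <= y}.
Proof. exact: le_mono lt_rphi. Qed.

Lemma rphi_inj : injective phi.
Proof. exact: inc_inj ler_rphi. Qed.

Lemma continuous_rphi : continuous phi.
Proof.
move=> x; have normX : {for x, continuous (fun z : R => `|z| ^+ (r - 2))}.
  exact: (continuous_comp (@norm_continuous _ R x) (@exprn_continuous R _ _)).
exact: continuousM normX cvg_id.
Qed.

Lemma rphi_surj y : exists x, phi x = y.
Proof.
pose b := `|y| + 1.
have b_ge1 : 1 <= b by rewrite lerDr.
have b_ge0 : 0 <= b := le_trans ler01 b_ge1.
have y_lt_b : `|y| < phi b.
  rewrite ger0_rphi // exprSr (@lt_le_trans _ _ b) ?ltrDl //.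
  by rewrite ler_pMl ?(lt_le_trans ltr01 b_ge1) // exprn_ege1.
have mb_le_b : - b <= b by rewrite lerNl (le_trans _ b_ge0) // oppr_le0.
have phi_mb_le_b : phi (- b) <= phi b by rewrite ler_rphi.
have y_between : Num.min (phi (- b)) (phi b) <= y <= Num.max (phi (- b)) (phi b).
  rewrite (min_l phi_mb_le_b) (max_r phi_mb_le_b) rphiN.
  by have := ler_norm y; have := ler_norm (- y); rewrite normrN; lra.
have [x _ <-] := IVT mb_le_b (continuous_subspaceT continuous_rphi) y_between.
by exists x.
Qed.

Definition rphi_inv (y : R) : R := projT1 (cid (rphi_surj y)).

Lemma rphi_invK : cancel rphi_inv phi.
Proof. by move=> y; exact: projT2 (cid (rphi_surj y)). Qed.

Lemma rphiK : cancel phi rphi_inv.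
Proof. by move=> x; apply: rphi_inj; rewrite rphi_invK. Qed.

Lemma ler_rphi_inv : {mono rphi_inv : x y / x <= y}.
Proof. by move=> x y; rewrite -ler_rphi !rphi_invK. Qed.

Lemma ltr_rphi_inv : {mono rphi_inv : x y / x < y}.
Proof. exact: leW_mono ler_rphi_inv. Qed.

Lemma rphi_inv0 : rphi_inv 0 = 0.
Proof. by apply: rphi_inj; rewrite rphi_invK /rphi mulr0. Qed.

Lemma continuous_rphi_inv : continuous rphi_inv.
Proof.
move=> y; have rphiK_near : {near rphi_inv y, cancel phi rphi_inv}.
  by apply: filterE => x; exact: rphiK.
have rphi_near : {near rphi_inv y, continuous phi}.
  by apply: filterE => x; exact: continuous_rphi.
have := near_can_continuous rphiK_near rphi_near.
by rewrite rphi_invK => /nbhs_singleton.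
Qed.

End Rphi.

Section Shooting.
Variables (R : realType) (r n : nat) (Q P : nat -> R).
Hypothesis Q_incr : forall i, (i <= n)%N -> Q i < Q i.+1.

Definition slope (u : nat -> R) i := (u i.+1 - u i) / (Q i.+1 - Q i).

Definition load i := \sum_(1 <= k < i.+1) P k.

Definition shoot (c : R) k :=
  \sum_(0 <= i < k) (Q i.+1 - Q i) * rphi_inv r (c - load i).

Lemma mesh_gt0 i : (i <= n)%N -> 0 < Q i.+1 - Q i.
Proof. by move=> i_le; rewrite subr_gt0 Q_incr. Qed.

Lemma mesh_neq0 i : (i <= n)%N -> Q i.+1 - Q i != 0.
Proof. by move=> i_le; rewrite gt_eqF // mesh_gt0. Qed.

Lemma load0 : load 0 = 0.
Proof. by rewrite /load big_geq. Qed.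

Lemma loadS i : load i.+1 = load i + P i.+1.
Proof. by rewrite /load big_nat_recr. Qed.

Lemma shoot0 c : shoot c 0 = 0.
Proof. by rewrite /shoot big_geq. Qed.

Lemma shootS c k :
  shoot c k.+1 = shoot c k + (Q k.+1 - Q k) * rphi_inv r (c - load k).
Proof. by rewrite /shoot big_nat_recr. Qed.

Lemma slope_shoot c k : (k <= n)%N -> slope (shoot c) k = rphi_inv r (c - load k).
Proof.
move=> k_le; rewrite /slope shootS [shoot c k + _]addrC addrK.
by rewrite mulrAC divff ?mul1r // mesh_neq0.
Qed.

Lemma shoot_solves c : shoot c n.+1 = 0 -> solves r n Q P (shoot c).
Proof.
move=> c_root; split; first exact: shoot0.
split=> // -[//|j] /andP[_ j_lt].
rewrite -/(slope (shoot c) j.+1) -/(slope (shoot c) j).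
rewrite (slope_shoot c j_lt) (slope_shoot c (ltnW j_lt)) !rphi_invK loadS.
lra.
Qed.

Lemma solves_rphi_slope u : solves r n Q P u ->
  forall i, (i <= n)%N -> rphi r (slope u i) = rphi r (slope u 0) - load i.
Proof.
case=> _ [_ u_eq]; elim=> [|i IH] i_lt; first by rewrite load0 subr0.
have := u_eq i.+1 i_lt; rewrite -/(slope u i.+1) -/(slope u i) loadS.
by have := IH (ltnW i_lt); lra.
Qed.

Lemma solves_shootE u : solves r n Q P u ->
  forall k, (k <= n.+1)%N -> u k = shoot (rphi r (slope u 0)) k.
Proof.
move=> u_sol; have [u0 _] := u_sol.
elim=> [|k IH] k_le; first by rewrite u0 shoot0.
rewrite shootS -IH; last exact: ltnW.
rewrite -(solves_rphi_slope u_sol k_le) rphiK /slope mulrC divfK ?mesh_neq0 //.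
by rewrite addrC subrK.
Qed.

Lemma lt_shoot : {homo (fun c => shoot c n.+1) : c d / c < d}.
Proof.
move=> c d cd; apply: ltr_sum_nat => // i /andP[_ i_le].
by rewrite ltr_pM2l ?(mesh_gt0 i_le) // ltr_rphi_inv ltrD2r.
Qed.

Lemma continuous_shoot k : continuous (fun c => shoot c k).
Proof.
apply: (continuous_big add_continuous) => i _ c.
have shift : {for c, continuous (fun x : R => x - load i)}.
  by apply: continuousB; [exact: cvg_id | exact: cst_continuous].
have flux : {for c, continuous (fun x => rphi_inv r (x - load i))}.
  exact: (continuous_comp shift (@continuous_rphi_inv R r (c - load i))).
have cst_mesh : {for c, continuous (fun _ : R => Q i.+1 - Q i)}.
  exact: cst_continuous.
exact: (continuousM cst_mesh flux).
Qed.

Lemma shoot_le0 c : (forall i, (i <= n)%N -> c <= load i) -> shoot c n.+1 <= 0.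
Proof.
move=> c_le; rewrite /shoot big_nat; apply: sumr_le0 => i /andP[_ i_le].
rewrite mulr_ge0_le0 ?(ltW (mesh_gt0 i_le)) //.
by rewrite -(rphi_inv0 R r) ler_rphi_inv subr_le0 c_le.
Qed.

Lemma shoot_ge0 c : (forall i, (i <= n)%N -> load i <= c) -> 0 <= shoot c n.+1.
Proof.
move=> c_ge; rewrite /shoot big_nat; apply: sumr_ge0 => i /andP[_ i_le].
rewrite mulr_ge0 ?(ltW (mesh_gt0 i_le)) //.
by rewrite -(rphi_inv0 R r) ler_rphi_inv subr_ge0 c_ge.
Qed.

Lemma shoot_root_exists : exists c, shoot c n.+1 = 0.
Proof.
pose M := \sum_(0 <= i < n.+1) `|load i|.
have load_le i : (i <= n)%N -> `|load i| <= M.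
  move=> i_le; rewrite /M (bigD1_seq i) ?mem_index_iota ?iota_uniq //= lerDl.
  by apply: sumr_ge0 => j _.
have mM_le_M : - M <= M by have := load_le 0%N isT; have := normr_ge0 (load 0); lra.
have shoot_mM : shoot (- M) n.+1 <= 0.
  by apply: shoot_le0 => i /load_le; rewrite ler_norml => /andP[].
have shoot_M : 0 <= shoot M n.+1.
  by apply: shoot_ge0 => i /load_le; rewrite ler_norml => /andP[].
have shoot_mM_le : shoot (- M) n.+1 <= shoot M n.+1 := le_trans shoot_mM shoot_M.
have zero_between : Num.min (shoot (- M) n.+1) (shoot M n.+1) <= 0
                      <= Num.max (shoot (- M) n.+1) (shoot M n.+1).
  by rewrite (min_l shoot_mM_le) (max_r shoot_mM_le) shoot_mM shoot_M.
have [c _ c_root] :=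
  IVT mM_le_M (continuous_subspaceT (@continuous_shoot n.+1)) zero_between.
by exists c.
Qed.

End Shooting.

Theorem mainTheorem8 (R : realType) (r n : nat) (Q P : nat -> R) :
  (2 <= r)%N -> ~~ odd r ->
  (forall i : nat, (i <= n)%N -> Q i < Q i.+1) ->
  exists u : nat -> R, solves r n Q P u /\
    forall v : nat -> R, solves r n Q P v ->
      forall i : nat, (i <= n.+1)%N -> v i = u i.
Proof.
move=> _ _ Q_incr.
have [c c_root] := shoot_root_exists r P Q_incr.
exists (shoot r Q P c); split; first exact: shoot_solves.
move=> v v_sol i i_le; have v_shoot := solves_shootE Q_incr v_sol.
suff <- : rphi r (slope Q v 0) = c by exact: v_shoot.
apply: (inc_inj (le_mono (lt_shoot r P Q_incr))) => /=.
by rewrite c_root -v_shoot //; case: v_sol => _ [].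
Qed.
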